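(* In the #-KEG, suppose that the IA algorithm $\mathcal{A}$, whenever the remaining external graph $(V,E^I(\mathbf{M}))$ has several maximum-cardinality matchings, selects one that lexicographically maximizes the numbers of matched vertices of the players taken in non-increasing order of their number of revealed vertices (i.e. it first maximizes the number of matched vertices of the player with the most revealed vertices, then of the second, etc.), this rule being applied in whatever game results from the players' revelations. Then no player has a strict incentive to hide vertices: for every player $p$, every profile $M^{-p}$ of matchings of the opponents' graphs, and every subset $V'\subseteq V^p$, the maximum utility player $p$ can achieve (over matchings $M^p$ of $G^p$) when all her vertices are revealed is at least $2\nu(G^p[V'])$ plus the maximum utility she can achieve (over matchings of $G^p-V'$) in the game in which the vertices of $V'$ and their incident edges are removed, where $\nu(G^p[V'])$ is the size of a maximum matching of the subgraph of $G^p$ induced by $V'$.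
   Context: The #-KEG: $N=\{1,\dots,n\}$ is a finite set of players; player $p$ has internal graph $G^p=(V^p,E^p)$ (vertex sets pairwise disjoint); $E^I$ is a set of external edges each joining vertices of two different players; $G=(V,E)$ with $V=\bigcup_pV^p$, $E=E^I\cup\bigcup_pE^p$. A strategy of player $p$ is a matching $M^p$ of $G^p$. Given $\mathbf{M}=(M^1,\dots,M^n)$, $E^I(\mathbf{M})$ is the set of external edges with both endpoints uncovered by $\bigcup_pM^p$, and the IA selects a maximum-cardinality matching $M^I=\mathcal{A}(\mathbf{M})$ of $(V,E^I(\mathbf{M}))$ via a deterministic algorithm $\mathcal{A}$. With $M^I_p$ the edges of $M^I$ incident to $V^p$, player $p$'s utility is $2|M^p|+|M^I_p|$. Hiding a set $V'\subseteq V^p$ means that the game is played on $G$ with $V'$ and all edges incident to $V'$ removed, while player $p$ can additionally match the hidden vertices among themselves using edges of $G^p$ inside $V'$, each such internal edge adding 2 to her utility. *)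

From mathcomp Require Import all_boot.
Set Implicit Arguments. Unset Strict Implicit. Unset Printing Implicit Defensive.

Section KEG.
Variables (n : nat) (V : finType) (owner : V -> 'I_n) (adj : rel V).

Definition is_edge (r : rel V) (e : {set V}) : bool :=
  [exists u, exists v, r u v && (e == [set u; v])].

Definition is_matching (r : rel V) (M : {set {set V}}) : bool :=
  [forall e in M, is_edge r e] &&
  [forall e1 in M, forall e2 in M, (e1 != e2) ==> [disjoint e1 & e2]].

Definition covered (M : {set {set V}}) : {set V} := \bigcup_(e in M) e.

Definition maximum_matching (r : rel V) (M : {set {set V}}) : Prop :=
  is_matching r M /\ forall N, is_matching r N -> #|N| <= #|M|.

Definition nu (r : rel V) : nat := \max_(N : {set {set V}} | is_matching r N) #|N|.

(* Game played on the revealed vertex set R (edges incident to V \ R removed). *)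
Definition intr (R : {set V}) (q : 'I_n) : rel V :=
  fun u v => [&& u \in R, v \in R, adj u v, owner u == q & owner v == q].
Definition extr (R : {set V}) : rel V :=
  fun u v => [&& u \in R, v \in R, adj u v & owner u != owner v].

Definition profile := {ffun 'I_n -> {set {set V}}}.

Definition valid_profile (R : {set V}) (M : profile) : Prop :=
  forall q, is_matching (intr R q) (M q).

Definition all_covered (M : profile) : {set V} := \bigcup_(q : 'I_n) covered (M q).

Definition ext_rem (R : {set V}) (M : profile) : rel V :=
  fun u v => [&& extr R u v, u \notin all_covered M & v \notin all_covered M].

Definition nrevealed (R : {set V}) (q : 'I_n) : nat := #|[set v in R | owner v == q]|.

Definition nmatched (M : {set {set V}}) (q : 'I_n) : nat :=
  #|[set v in covered M | owner v == q]|.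

Definition incident (M : {set {set V}}) (q : 'I_n) : {set {set V}} :=
  [set e in M | [exists v in e, owner v == q]].

Fixpoint lex_le (a b : seq nat) : bool :=
  match a, b with
  | x :: a', y :: b' => (x < y) || ((x == y) && lex_le a' b')
  | _, _ => true
  end.

(* The IA rule: A R M is a maximum matching of (R, E^I(M)) that lexicographically
   maximizes the matched-vertex counts of players listed in non-increasing order
   of their number of revealed vertices (ties in any order). *)
Definition lex_IA (A : {set V} -> profile -> {set {set V}}) : Prop :=
  forall (R : {set V}) (M : profile), valid_profile R M ->
    exists s : seq 'I_n,
      [/\ perm_eq s (enum 'I_n),
          sorted (fun q q' => nrevealed R q' <= nrevealed R q) s,
          maximum_matching (ext_rem R M) (A R M) &
          forall N, maximum_matching (ext_rem R M) N ->
            lex_le [seq nmatched N q | q <- s] [seq nmatched (A R M) q | q <- s]].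

Definition upd (M : profile) (p : 'I_n) (Mp : {set {set V}}) : profile :=
  [ffun q => if q == p then Mp else M q].

Definition utility (A : {set V} -> profile -> {set {set V}}) (R : {set V})
    (M : profile) (p : 'I_n) : nat :=
  2 * #|M p| + #|incident (A R M) p|.

Definition best_utility (A : {set V} -> profile -> {set {set V}}) (R : {set V})
    (Mopp : profile) (p : 'I_n) : nat :=
  \max_(Mp : {set {set V}} | is_matching (intr R p) Mp) utility A R (upd Mopp p Mp) p.

End KEG.

From mathcomp Require Import all_boot.
Set Implicit Arguments. Unset Strict Implicit. Unset Printing Implicit Defensive.

(* When p reveals V' and adds a maximum matching of G^p[V'] to her strategy, she gains
   2 nu(G^p[V']) internally; it remains to see that the IA matches no fewer of her vertices.
   Revealing only adds external edges at vertices of V', all owned by p, and raises p's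
   number of revealed vertices while fixing the others', so p keeps priority over every
   player she had priority over. Compare the IA matchings N (hidden) and Np (revealed): a
   p-vertex matched by N but not by Np starts an N/Np-alternating walk, which cannot end
   N-covered (it would augment Np) and must end at a p-vertex matched by Np but not by N,
   since otherwise swapping N and Np along the walk would lexicographically improve one of
   the two IA matchings against p's priority. Distinct starts give distinct ends. *)

Section Matchings.
Variables (V : finType) (r : rel V).
Implicit Types (M N : {set {set V}}) (e : {set V}) (u v w : V).

Lemma matching0 : is_matching r set0.
Proof. by apply/andP; split; apply/forallP=> e; rewrite inE. Qed.

Lemma matching_sub (r' : rel V) M : subrel r r' -> is_matching r M -> is_matching r' M.
Proof.
move=> sub /andP[/forallP edges disj]; apply/andP; split=> //.
apply/forallP=> e; apply/implyP=> eM.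
have /existsP[u /existsP[w /andP[ruw Ee]]] := implyP (edges e) eM.
by apply/existsP; exists u; apply/existsP; exists w; rewrite sub.
Qed.

Lemma coveredP M v : reflect (exists2 e, e \in M & v \in e) (v \in covered M).
Proof. by apply: (iffP bigcupP) => -[e]; exists e. Qed.

Lemma covered_setU M N v :
  (v \in covered (M :|: N)) = (v \in covered M) || (v \in covered N).
Proof. by rewrite /covered bigcup_setU inE. Qed.

Lemma matching_disjoint M e1 e2 : is_matching r M -> e1 \in M -> e2 \in M ->
  e1 != e2 -> [disjoint e1 & e2].
Proof.
move=> /andP[_ /forall_inP disj] e1M e2M; exact: implyP (forall_inP (disj e1 e1M) e2 e2M).
Qed.

Lemma matching_edge_eq M e1 e2 v : is_matching r M -> e1 \in M -> e2 \in M ->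
  v \in e1 -> v \in e2 -> e1 = e2.
Proof.
move=> hM e1M e2M ve1 ve2; apply/eqP/negPn/negP=> /(matching_disjoint hM e1M e2M).
by move/pred0P/(_ v); rewrite /= ve1 ve2.
Qed.

Lemma covered_sub M (X : {set V}) : (forall u v, r u v -> (u \in X) && (v \in X)) ->
  is_matching r M -> covered M \subset X.
Proof.
move=> rX /andP[/forallP edges _]; apply/subsetP=> x /coveredP[e eM xe].
have /existsP[u /existsP[w /andP[ruw /eqP Ee]]] := implyP (edges e) eM.
by move: xe; rewrite Ee !inE => /orP[]/eqP->; case/andP: (rX _ _ ruw).
Qed.

Lemma edge_sub_covered M e : e \in M -> e \subset covered M.
Proof. by move=> eM; apply/subsetP=> v ve; apply/coveredP; exists e. Qed.

Lemma matching_setU M N : is_matching r M -> is_matching r N ->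
  [disjoint covered M & covered N] -> is_matching r (M :|: N).
Proof.
move=> hM hN MN; case/andP: (hM) => /forall_inP eM _; case/andP: (hN) => /forall_inP eN _.
apply/andP; split; first by apply/forall_inP=> e; rewrite inE => /orP[/eM | /eN].
have cross e1 e2 : e1 \in M -> e2 \in N -> [disjoint e1 & e2].
  move=> /edge_sub_covered e1M /edge_sub_covered e2N.
  exact: disjointWl e1M (disjointWr e2N MN).
apply/forall_inP=> e1 e1MN; apply/forall_inP=> e2 e2MN; apply/implyP=> e12.
move: e1MN e2MN; rewrite !inE => /orP[] e1in /orP[] e2in.
- exact: matching_disjoint hM e1in e2in e12.
- exact: cross.
- by rewrite disjoint_sym cross.
- exact: matching_disjoint hN e1in e2in e12.
Qed.

Lemma matching_sep (r' : rel V) M (P : pred {set V}) : is_matching r M ->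
  (forall u v, r u v -> P [set u; v] -> r' u v) -> is_matching r' [set e in M | P e].
Proof.
move=> /andP[/forall_inP edges /forall_inP disj] rr'; apply/andP; split.
  apply/forall_inP=> e; rewrite inE => /andP[/edges/existsP[u /existsP[w /andP[ruw /eqP Ee]]]].
  by rewrite Ee => Pe; apply/existsP; exists u; apply/existsP; exists w; rewrite rr' ?eqxx.
apply/forall_inP=> e1; rewrite inE => /andP[/disj/forall_inP d1 _].
by apply/forall_inP=> e2; rewrite inE => /andP[/d1].
Qed.

Hypothesis r_irr : irreflexive r.

Lemma matching_edgeP M e : is_matching r M -> e \in M ->
  exists u w, [/\ r u w, u != w & e = [set u; w]].
Proof.
case/andP=> /forallP edges _ eM.
have /existsP[u /existsP[w /andP[ruw /eqP Ee]]] := implyP (edges e) eM.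
by exists u, w; split=> //; apply: contraTneq ruw => ->; rewrite r_irr.
Qed.

Definition mate M v : V := odflt v [pick u | [set v; u] \in M].

Lemma mateP M e v : is_matching r M -> e \in M -> v \in e ->
  e = [set v; mate M v] /\ mate M v != v.
Proof.
move=> hM eM ve; have [x [y [_ xy Ee]]] := matching_edgeP hM eM.
have [u uv Evu] : exists2 u, u != v & e = [set v; u].
  move: ve; rewrite Ee !inE => /orP[]/eqP->; first by exists y; rewrite // eq_sym.
  by exists x; rewrite // setUC.
rewrite /mate; case: pickP => [w wM | /(_ u)]; last by rewrite -Evu eM.
have Evw : e = [set v; w] by apply: (matching_edge_eq hM eM wM ve); rewrite setU11.
split=> //=; apply: contraNneq uv => wv.
by have := setU11 u [set v]; rewrite setUC -Evu Evw wv setUid inE.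
Qed.

Lemma mate_id M v : v \notin covered M -> mate M v = v.
Proof.
rewrite /mate; case: pickP => //= u vuM; case/coveredP.
by exists [set v; u]; rewrite // setU11.
Qed.

Lemma mate_eq M v : is_matching r M -> (mate M v != v) = (v \in covered M).
Proof.
move=> hM; apply/idP/idP => [|/coveredP[e eM ve]]; last by case: (mateP hM eM ve).
by apply: contraR => /mate_id ->.
Qed.

Lemma mate_edge M v : is_matching r M -> v \in covered M -> [set v; mate M v] \in M.
Proof. by move=> hM /coveredP[e eM ve]; case: (mateP hM eM ve) => <-. Qed.

Lemma mateK M : is_matching r M -> involutive (mate M).
Proof.
move=> hM v; have [/coveredP[e eM ve] | vM] := boolP (v \in covered M); last by rewrite !mate_id.
have [Ee mv] := mateP hM eM ve.
have mve : mate M v \in e by rewrite Ee !inE eqxx orbT.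
have [Ee' mmv] := mateP hM eM mve.
have : mate M (mate M v) \in e by rewrite Ee' !inE eqxx orbT.
by rewrite Ee !inE (negbTE mmv) orbF => /eqP.
Qed.

Lemma card_covered M : is_matching r M -> #|covered M| = 2 * #|M|.
Proof.
move=> hM; have /eqP <- : trivIset M.
  by apply/trivIsetP => e1 e2; apply: matching_disjoint.
rewrite (eq_bigr (fun=> 2)) => [|e eM]; first by rewrite sum_nat_const mulnC.
by have [u [w [_ uw ->]]] := matching_edgeP hM eM; rewrite cards2 uw.
Qed.

Lemma card_matching_setU M N : is_matching r M ->
  [disjoint covered M & covered N] -> #|M :|: N| = #|M| + #|N|.
Proof.
move=> hM MN; rewrite cardsU; suff -> : M :&: N = set0 by rewrite cards0 subn0.
apply/setP=> e; rewrite !inE; apply/andP=> -[eM eN].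
have [u [w [_ _ Ee]]] := matching_edgeP hM eM.
have ue : u \in e by rewrite Ee !inE eqxx.
have uM := subsetP (edge_sub_covered eM) u ue.
by have := subsetP (edge_sub_covered eN) u ue; rewrite (disjointFr MN uM).
Qed.

Hypothesis r_sym : symmetric r.

Lemma mate_rel M v : is_matching r M -> v \in covered M -> r v (mate M v).
Proof.
move=> hM vM; have [x [y [rxy _ Ee]]] := matching_edgeP hM (mate_edge hM vM).
have := mate_eq v hM; rewrite vM; move: (mate M v) Ee => w Ee wv.
have vxy : v \in [set x; y] by rewrite -Ee !inE eqxx.
have wxy : w \in [set x; y] by rewrite -Ee !inE eqxx orbT.
move: vxy wxy wv; rewrite !inE => /orP[]/eqP-> /orP[]/eqP->; rewrite ?eqxx //.
by rewrite r_sym.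
Qed.

End Matchings.

Section Swap.
Variables (V : finType) (r1 r2 r : rel V).
Hypotheses (r1_irr : irreflexive r1) (r2_irr : irreflexive r2).
Variables (N1 N2 : {set {set V}}) (C : {set V}).
Hypotheses (hN1 : is_matching r1 N1) (hN2 : is_matching r2 N2).
Hypotheses (C_mate1 : forall v, v \in C -> mate N1 v \in C)
           (C_mate2 : forall v, v \in C -> mate N2 v \in C).
Hypothesis r1_out : forall u v, r1 u v -> u \notin C -> v \notin C -> r u v.
Hypothesis r2_in : forall u v, r2 u v -> u \in C -> v \in C -> r u v.

Definition swap := [set e in N1 | e \subset ~: C] :|: [set e in N2 | e \subset C].

Lemma mate1_notin v : v \notin C -> mate N1 v \notin C.
Proof.
by apply: contra => /C_mate1; rewrite (mateK r1_irr hN1).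
Qed.

Lemma swap_matching : is_matching r swap.
Proof.
apply: matching_setU.
- by apply: matching_sep hN1 _ => u v ruv; rewrite subUset !sub1set !inE => /andP[]; apply: r1_out.
- by apply: matching_sep hN2 _ => u v ruv; rewrite subUset !sub1set => /andP[]; apply: r2_in.
rewrite disjoints_subset; apply/bigcupsP=> e1; rewrite inE => /andP[_ /subset_trans]; apply.
by rewrite setCS; apply/bigcupsP=> e2; rewrite inE => /andP[].
Qed.

Lemma covered_swap v :
  (v \in covered swap) = (if v \in C then v \in covered N2 else v \in covered N1).
Proof.
have [vC|vC] := ifPn; apply/idP/idP.
- case/coveredP=> e; rewrite !inE => /orP[]/andP[eN /subsetP eC] ve.
    by have := eC v ve; rewrite inE vC.
  by apply/coveredP; exists e.
- move=> vN; apply/coveredP; exists [set v; mate N2 v]; last by rewrite !inE eqxx.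
  by rewrite !inE (mate_edge r2_irr hN2 vN) !subUset !sub1set vC C_mate2 ?orbT.
- case/coveredP=> e; rewrite !inE => /orP[]/andP[eN /subsetP eC] ve.
    by apply/coveredP; exists e.
  by have := eC v ve; rewrite (negbTE vC).
- move=> vN; apply/coveredP; exists [set v; mate N1 v]; last by rewrite !inE eqxx.
  by rewrite !inE (mate_edge r1_irr hN1 vN) !subUset !sub1set !inE vC mate1_notin.
Qed.

End Swap.

Section AlternatingWalk.
Variables (T : finType) (m : bool -> T -> T).
Hypothesis m_inv : forall t, involutive (m t).

(* A state (v, t) is at vertex v, about to move along the involution m t. *)
Definition walk_step (x : T * bool) : T * bool := (m x.2 x.1, ~~ x.2).
Definition stuck (x : T * bool) : bool := m x.2 x.1 == x.1.

Lemma walk_step_inj : injective walk_step.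
Proof. by move=> [v t] [v' t'] [Ev /negb_inj Et]; subst t'; rewrite -[v](m_inv t) Ev m_inv. Qed.

Lemma iter_walk_step_inj k : injective (iter k walk_step).
Proof. by elim: k => [|k IH] x y //= /walk_step_inj /IH. Qed.

Definition walk_len (x : T * bool) : nat :=
  find (fun k => stuck (iter k walk_step x)) (iota 0 #|{: T * bool}|).

Definition walk_end (x : T * bool) : T * bool := iter (walk_len x) walk_step x.

Section FreeStart.
Variable b : T.
Hypothesis b_free : m false b = b.

Local Notation x0 := (b, true).
Local Notation k := (walk_len x0).
Local Notation vtx j := (iter j walk_step x0).1.
Local Notation dir j := (iter j walk_step x0).2.

(* Going backwards from (b, true) is stuck at once, so the orbit of the injective step
   reaches a stuck state just before closing up. *)
Lemma has_stuck : has (fun k => stuck (iter k walk_step x0)) (iota 0 #|{: T * bool}|).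
Proof.
apply/hasP; exists (order walk_step x0).-1.
  by rewrite mem_iota add0n prednK ?order_gt0 //; exact: max_card.
have : walk_step (iter (order walk_step x0).-1 walk_step x0) = walk_step (b, false).
  rewrite -iterS prednK ?order_gt0 // iter_order; last exact: walk_step_inj.
  by rewrite /walk_step /= b_free.
by move/walk_step_inj ->; rewrite /stuck /= b_free.
Qed.

Lemma walk_len_lt : k < #|{: T * bool}|.
Proof. by rewrite -[X in _ < X](size_iota 0) -has_find has_stuck. Qed.

Lemma stuck_walk_end : stuck (walk_end x0).
Proof. by have := nth_find 0 has_stuck; rewrite nth_iota ?walk_len_lt. Qed.

Lemma walk_unstuck j : j < k -> ~~ stuck (iter j walk_step x0).
Proof.
move=> jk; have := before_find 0 jk; rewrite nth_iota ?add0n => [->//|].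
exact: ltn_trans jk walk_len_lt.
Qed.

Lemma walk_back j : 0 < j <= k -> m (~~ dir j) (vtx j) = vtx j.-1 /\ vtx j.-1 != vtx j.
Proof.
case: j => // j /= jk; rewrite negbK m_inv; split=> //.
by rewrite eq_sym; exact: walk_unstuck.
Qed.

Definition walk_set : {set T} := [set vtx j | j : 'I_k.+1].

Lemma walk_set_closed t v : v \in walk_set -> m t v \in walk_set.
Proof.
case/imsetP=> -[j /= jk] _ ->; rewrite ltnS in jk.
have [-> | /negPf tj] := eqVneq t (dir j).
  have [jk'|jk'] := ltnP j k; last first.
    have -> : j = k by apply/anti_leq/andP.
    by move/eqP: stuck_walk_end => ->; apply/imsetP; exists ord_max.
  by apply/imsetP; exists (Ordinal (jk' : j.+1 < k.+1)).
have -> : t = ~~ dir j by case: t (dir j) tj => [] [].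
case: (posnP j) => [-> | j0]; first by rewrite /= b_free; apply/imsetP; exists ord0.
have [-> _] := walk_back (j := j) (introT andP (conj j0 jk)).
by apply/imsetP; exists (Ordinal (leq_ltn_trans (leq_pred j) (jk : j < k.+1))).
Qed.

Lemma walk_inner j t : 0 < j < k -> m t (vtx j) != vtx j.
Proof.
case/andP=> j0 jk; have [-> | /negPf tj] := eqVneq t (dir j); first exact: walk_unstuck.
have -> : t = ~~ dir j by case: t (dir j) tj => [] [].
have [-> ] := walk_back (introT andP (conj j0 (ltnW jk))).
by rewrite eq_sym.
Qed.

Lemma walk_len_gt0 : m true b != b -> 0 < k.
Proof.
apply: contraNT; rewrite lt0n negbK => /eqP k0.
by have := stuck_walk_end; rewrite /walk_end k0.
Qed.

Lemma walk_end_moved : m true b != b ->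
  m (~~ (walk_end x0).2) (walk_end x0).1 != (walk_end x0).1.
Proof.
move=> b_moves; have [-> ] := walk_back (introT andP (conj (walk_len_gt0 b_moves) (leqnn k))).
by rewrite eq_sym.
Qed.

End FreeStart.

(* A walk from a free start cannot pass through another free start, since the state
   (b, true) is only reachable from the stuck state (b, false). *)
Lemma walk_end_inj b b' : m false b = b -> m false b' = b' ->
  walk_end (b, true) = walk_end (b', true) -> b = b'.
Proof.
wlog le : b b' / walk_len (b, true) <= walk_len (b', true).
  move=> wlog_le fb fb' E; have [le|/ltnW le] := leqP (walk_len (b, true)) (walk_len (b', true)).
    exact: wlog_le.
  by apply/esym/wlog_le.
move=> fb fb' E; set d := walk_len (b', true) - walk_len (b, true).
have : iter (walk_len (b, true)) walk_step (b, true) =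
       iter (walk_len (b, true)) walk_step (iter d walk_step (b', true)).
  by rewrite -iterD subnKC.
move/iter_walk_step_inj; case: (posnP d) => [-> [] // | d0].
have step_b : walk_step (b, false) = (b, true) by rewrite /walk_step /= fb.
rewrite -(prednK d0) iterS -step_b => /walk_step_inj Eb.
have d_lt : d.-1 < walk_len (b', true) by rewrite prednK // leq_subr.
by have := walk_unstuck fb' d_lt; rewrite -Eb /stuck /= fb eqxx.
Qed.

End AlternatingWalk.

Lemma lex_le_shift_index (I : eqType) (f g : I -> nat) (a c : I) (s : seq I) :
  a != c -> c \in s -> (forall q, g q + (q == a) = f q + (q == c)) ->
  lex_le [seq g q | q <- s] [seq f q | q <- s] -> index a s < index c s.
Proof.
move=> ac; elim: s => // q s IH; rewrite inE => cs shift /=.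
have [-> | qa] := eqVneq q a; first by rewrite (negbTE ac).
have [qc | qc] := eqVneq q c.
  by rewrite qc; have := shift c; rewrite eqxx eq_sym (negbTE ac) addn0 addn1 => ->;
     rewrite ltnNge leqnSn eqn_leq ltnn.
have := shift q; rewrite (negbTE qa) (negbTE qc) !addn0 => ->; rewrite ltnn eqxx /= ltnS.
by apply: IH; rewrite // eq_sym (negbTE qc) in cs.
Qed.

Lemma card_sep_setU1 (T : finType) (P : pred T) (x : T) (X : {set T}) : x \notin X ->
  #|[set v in x |: X | P v]| = P x + #|[set v in X | P v]|.
Proof.
move=> xX; have [Px | nPx] := boolP (P x).
  have -> : [set v in x |: X | P v] = x |: [set v in X | P v].
    by apply/setP=> v; rewrite !inE; have [->|] := eqVneq v x.
  by rewrite cardsU1 inE (negbTE xX).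
suff -> : [set v in x |: X | P v] = [set v in X | P v] by [].
by apply/setP=> v; rewrite !inE; have [->|] //= := eqVneq v x; rewrite (negbTE nPx) andbF.
Qed.

Section LexExchange.
Variables (n : nat) (V : finType) (owner : V -> 'I_n).

Lemma lex_le_nmatched_index (s : seq 'I_n) (M N : {set {set V}}) b e :
  owner e \in s -> owner b != owner e -> b \notin covered M -> e \notin covered N ->
  b |: covered M = e |: covered N ->
  lex_le [seq nmatched owner M q | q <- s] [seq nmatched owner N q | q <- s] ->
  index (owner b) s < index (owner e) s.
Proof.
move=> es be bM eN E; apply: lex_le_shift_index => // q.
rewrite /nmatched addnC [RHS]addnC ![q == _]eq_sym.
by rewrite -(card_sep_setU1 _ bM) -(card_sep_setU1 _ eN) E.
Qed.

End LexExchange.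

Lemma maximum_matching_cover (V : finType) (r : rel V) (M N : {set {set V}}) b e :
  irreflexive r -> maximum_matching r N -> is_matching r M ->
  b \notin covered M -> e \notin covered N -> b |: covered M = e |: covered N ->
  maximum_matching r M.
Proof.
move=> r_irr [hN N_max] hM bM eN E; split=> // N' hN'; apply: leq_trans (N_max _ hN') _.
have /eqP : #|b |: covered M| = #|e |: covered N| by rewrite E.
rewrite !cardsU1 bM eN eqn_add2l.
by rewrite (card_covered r_irr hM) (card_covered r_irr hN) eqn_pmul2l // => /eqP ->.
Qed.

(* g and gp are the remaining external graphs before and after p reveals W. *)
Section Exchange.
Variables (n : nat) (V : finType) (owner : V -> 'I_n) (g gp : rel V).
Hypotheses (g_sym : symmetric g) (g_irr : irreflexive g) (gp_irr : irreflexive gp).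
Variables (W : {set V}) (p : 'I_n) (s sp : seq 'I_n) (N Np : {set {set V}}).
Hypothesis g_sub : subrel g gp.
Hypothesis g_notin : forall u v, g u v -> u \notin W.
Hypothesis gp_out : forall u v, gp u v -> u \notin W -> v \notin W -> g u v.
Hypothesis W_owner : forall v, v \in W -> owner v = p.
Hypotheses (s_all : forall q, q \in s) (sp_all : forall q, q \in sp).
Hypothesis p_priority : forall a, a != p -> index p s < index a s -> index p sp < index a sp.
Hypothesis N_max : maximum_matching g N.
Hypothesis N_lex : forall M, maximum_matching g M ->
  lex_le [seq nmatched owner M q | q <- s] [seq nmatched owner N q | q <- s].
Hypothesis Np_max : maximum_matching gp Np.
Hypothesis Np_lex : forall M, maximum_matching gp M ->
  lex_le [seq nmatched owner M q | q <- sp] [seq nmatched owner Np q | q <- sp].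

Let hN := N_max.1.
Let hNp := Np_max.1.

Definition alt_mate (t : bool) : V -> V := if t then mate N else mate Np.

Lemma alt_mate_inv t : involutive (alt_mate t).
Proof. by case: t; [exact: (mateK g_irr hN) | exact: (mateK gp_irr hNp)]. Qed.

Section WalkFrom.
Variable b : V.
Hypotheses (bN : b \in covered N) (bNp : b \notin covered Np).

Let b_free : alt_mate false b = b. Proof. exact: mate_id. Qed.
Let b_moves : alt_mate true b != b. Proof. by rewrite /= (mate_eq g_irr _ hN). Qed.

Local Notation C := (walk_set alt_mate b).
Local Notation e := (walk_end alt_mate (b, true)).

Lemma walk_set_mateN v : v \in C -> mate N v \in C.
Proof. exact: (walk_set_closed alt_mate_inv b_free true). Qed.

Lemma walk_set_mateNp v : v \in C -> mate Np v \in C.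
Proof. exact: (walk_set_closed alt_mate_inv b_free false). Qed.

Lemma start_in_walk : b \in C.
Proof. by apply/imsetP; exists ord0. Qed.

Lemma end_in_walk : e.1 \in C.
Proof. by apply/imsetP; exists ord_max. Qed.

Lemma walk_setP v : v \in C ->
  [\/ v = b, v = e.1 | (v \in covered N) && (v \in covered Np)].
Proof.
case/imsetP=> -[j /= jk] _ ->; rewrite ltnS in jk.
have [->|j0] := posnP j; first by constructor 1.
have [jk'|jk'] := ltnP j (walk_len alt_mate (b, true)); last first.
  by constructor 2; have -> : j = walk_len alt_mate (b, true) by apply/anti_leq/andP.
constructor 3; rewrite -(mate_eq g_irr _ hN) -(mate_eq gp_irr _ hNp).
have inner t := walk_inner alt_mate_inv b_free t (introT andP (conj j0 jk')).
by rewrite (inner true) (inner false).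
Qed.

(* Otherwise the walk would be an augmenting path for Np in gp. *)
Lemma walk_end_dir : e.2 = true.
Proof.
case: (boolP e.2) => // /negbTE e2.
have eNp : e.1 \notin covered Np.
  by have := stuck_walk_end alt_mate_inv b_free; rewrite /stuck e2 -(mate_eq gp_irr _ hNp) negbK.
have eN : e.1 \in covered N.
  by have := walk_end_moved alt_mate_inv b_free b_moves; rewrite e2 (mate_eq g_irr _ hN).
have C_N v : v \in C -> v \in covered N by case/walk_setP=> [->|->|/andP[]].
have hS : is_matching gp (swap Np N C).
  by apply: (swap_matching hNp hN) => // u v /g_sub.
have sub : b |: covered Np \subset covered (swap Np N C).
  apply/subsetP=> v.
  rewrite in_setU1 (covered_swap gp_irr g_irr hNp hN walk_set_mateNp walk_set_mateN).
  by case/orP=> [/eqP->|vNp]; [rewrite start_in_walk | case: ifP => // /C_N].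
have := Np_max.2 _ hS; rewrite -(leq_pmul2l (isT : 0 < 2)).
rewrite -(card_covered gp_irr hS) -(card_covered gp_irr hNp) leqNgt.
by rewrite (leq_trans _ (subset_leq_card sub)) // cardsU1 bNp.
Qed.

Lemma walk_end_covered : (e.1 \in covered Np) && (e.1 \notin covered N).
Proof.
have := walk_end_moved alt_mate_inv b_free b_moves.
have := stuck_walk_end alt_mate_inv b_free.
by rewrite /stuck walk_end_dir /= -(mate_eq g_irr _ hN) -(mate_eq gp_irr _ hNp) negbK => -> ->.
Qed.

Lemma walk_set_covered v : v \in C ->
  ((v \in covered Np) = (v != b)) * ((v \in covered N) = (v != e.1)).
Proof.
case/andP: walk_end_covered => eNp eN.
case/walk_setP=> [->|->|/andP[vN vNp]]; rewrite ?eqxx ?bN ?eNp ?(negbTE bNp) ?(negbTE eN).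
- by split=> //; apply/esym/eqP=> be; move: bNp; rewrite be eNp.
- by split=> //; apply/esym/eqP=> eb; move: bNp; rewrite -eb eNp.
- rewrite vN vNp; split; apply/esym/eqP=> vE.
    by move: bNp; rewrite -vE vNp.
  by move: eN; rewrite -vE vN.
Qed.

Lemma covered_walk_swap :
  (b |: covered (swap N Np C) = e.1 |: covered N) *
  (e.1 |: covered (swap Np N C) = b |: covered Np).
Proof.
split; apply/setP=> v; rewrite !in_setU1.
  rewrite (covered_swap g_irr gp_irr hN hNp walk_set_mateN walk_set_mateNp).
  have [vC|vC] := ifPn; first by rewrite !walk_set_covered //; case: eqP; case: eqP.
  by rewrite (negbTE (memPnC vC _ start_in_walk)) (negbTE (memPnC vC _ end_in_walk)).
rewrite (covered_swap gp_irr g_irr hNp hN walk_set_mateNp walk_set_mateN).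
have [vC|vC] := ifPn; first by rewrite !walk_set_covered //; case: eqP; case: eqP.
by rewrite (negbTE (memPnC vC _ start_in_walk)) (negbTE (memPnC vC _ end_in_walk)).
Qed.

Lemma walk_end_owner : owner b = p -> owner e.1 = p.
Proof.
move=> bp; have [eW|eW] := boolP (e.1 \in W); first exact: W_owner.
apply/eqP/negPn/negP=> ep; case/andP: walk_end_covered => eNp eN.
have C_W v : v \in C -> v \notin W.
  move=> vC; have [-> //|ve] := eqVneq v e.1.
  have vN : v \in covered N by rewrite (walk_set_covered vC).2.
  exact: g_notin (mate_rel g_irr g_sym hN vN).
have [cov1 cov2] := covered_walk_swap.
have hS1 : is_matching g (swap N Np C).
  by apply: (swap_matching hN hNp) => // u v r uC vC; apply: gp_out; rewrite ?C_W.
have hS2 : is_matching gp (swap Np N C).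
  by apply: (swap_matching hNp hN) => // u v /g_sub.
have bS1 : b \notin covered (swap N Np C).
  by rewrite (covered_swap g_irr gp_irr hN hNp walk_set_mateN walk_set_mateNp) start_in_walk.
have eS2 : e.1 \notin covered (swap Np N C).
  by rewrite (covered_swap gp_irr g_irr hNp hN walk_set_mateNp walk_set_mateN) end_in_walk.
have lt1 := lex_le_nmatched_index (s_all _) _ bS1 eN cov1
  (N_lex (maximum_matching_cover g_irr N_max hS1 bS1 eN cov1)).
have lt2 := lex_le_nmatched_index (sp_all _) _ eS2 bNp cov2
  (Np_lex (maximum_matching_cover gp_irr Np_max hS2 eS2 bNp cov2)).
rewrite bp eq_sym in lt1 lt2; have := p_priority ep (lt1 ep).
by rewrite ltnNge ltnW ?lt2.
Qed.

End WalkFrom.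

Lemma nmatched_exchange : nmatched owner N p <= nmatched owner Np p.
Proof.
pose f v := if v \in covered Np then v else (walk_end alt_mate (v, true)).1.
have f_inj : {in [set v in covered N | owner v == p] &, injective f}.
  move=> u v; rewrite !inE /f => /andP[uN _] /andP[vN _].
  case: ifP => uNp; case: ifP => vNp // E.
  - by have /andP[_] := walk_end_covered vN (negbT vNp); rewrite -E uN.
  - by have /andP[_] := walk_end_covered uN (negbT uNp); rewrite E vN.
  apply: (walk_end_inj alt_mate_inv (mate_id (negbT uNp)) (mate_id (negbT vNp))).
  rewrite [walk_end _ (u, true)]surjective_pairing [walk_end _ (v, true)]surjective_pairing.
  by rewrite !walk_end_dir ?E ?uN ?vN ?uNp ?vNp.
rewrite /nmatched -(card_in_imset f_inj); apply/subset_leq_card/subsetP=> _ /imsetP[v vA ->].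
move: vA; rewrite !inE /f => /andP[vN /eqP vp]; case: ifP => vNp; first by rewrite vNp vp eqxx.
by case/andP: (walk_end_covered vN (negbT vNp)) => -> _; rewrite walk_end_owner ?vp ?eqxx ?vNp.
Qed.

End Exchange.

Lemma sorted_nonincr_index (T : eqType) (f : T -> nat) (s : seq T) x y :
  sorted (fun u v => f v <= f u) s -> x \in s -> y \in s ->
  index x s <= index y s -> f y <= f x.
Proof.
move=> s_sorted xs ys; apply: (sorted_leq_index _ _ s_sorted) => // u v w vu wv.
exact: leq_trans wv vu.
Qed.

Section Game.
Variables (n : nat) (V : finType) (owner : V -> 'I_n) (adj : rel V).
Hypotheses (adj_sym : symmetric adj) (adj_irr : irreflexive adj).

Lemma intr_irr R q : irreflexive (intr owner adj R q).
Proof. by move=> u; rewrite /intr adj_irr !andbF. Qed.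

Lemma ext_rem_irr R M : irreflexive (ext_rem owner adj R M).
Proof. by move=> u; rewrite /ext_rem /extr adj_irr !andbF. Qed.

Lemma ext_rem_sym R M : symmetric (ext_rem owner adj R M).
Proof.
move=> u v; rewrite /ext_rem /extr adj_sym [owner v == _]eq_sym.
by do 2!case: (_ \in R); do 2!case: (_ \in all_covered M); rewrite ?andbF.
Qed.

Lemma ext_rem_owner R M u v : ext_rem owner adj R M u v -> owner u != owner v.
Proof. by case/and3P=> /and4P[]. Qed.

(* An external edge has exactly one endpoint owned by q, so incident edges and matched
   vertices of q are in bijection. *)
Lemma card_incident R M N q : is_matching (ext_rem owner adj R M) N ->
  #|incident owner N q| = nmatched owner N q.
Proof.
move=> hN; have N_irr := ext_rem_irr R M.
have -> : incident owner N q = [set [set v; mate N v] | v in [set v in covered N | owner v == q]].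
  apply/setP=> e; rewrite inE; apply/andP/imsetP => [[eN /existsP[v /andP[ve vq]]] | [v]].
    exists v; last exact: proj1 (mateP N_irr hN eN ve).
    by rewrite inE vq andbT; apply/coveredP; exists e.
  rewrite inE => /andP[vN vq] ->; split; first exact: (mate_edge N_irr hN vN).
  by apply/existsP; exists v; rewrite !inE eqxx.
apply: card_in_imset => u v; rewrite !inE => /andP[uN /eqP uq] /andP[vN /eqP vq] E.
have : v \in [set u; mate N u] by rewrite E !inE eqxx.
rewrite !inE => /orP[/eqP -> // | /eqP vE].
have := ext_rem_owner (mate_rel N_irr (ext_rem_sym R M) hN uN).
by rewrite -vE uq vq eqxx.
Qed.

Lemma upd_same (M : profile n V) p X : upd M p X p = X.
Proof. by rewrite ffunE eqxx. Qed.

Lemma upd_other (M : profile n V) p X q : q != p -> upd M p X q = M q.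
Proof. by move=> qp; rewrite ffunE (negbTE qp). Qed.

Lemma all_coveredP (M : profile n V) v :
  reflect (exists q, v \in covered (M q)) (v \in all_covered M).
Proof. by apply: (iffP bigcupP) => [[q _]|[q]]; exists q. Qed.

Section Hiding.
Variables (p : 'I_n) (Mopp : profile n V) (V' : {set V}) (Mp Nint : {set {set V}}).
Hypothesis V'_owner : forall v, v \in V' -> owner v = p.
Hypothesis hMopp : forall q, q != p -> is_matching (intr owner adj setT q) (Mopp q).
Hypothesis hMp : is_matching (intr owner adj (~: V') p) Mp.
Hypothesis hNint : is_matching (intr owner adj V' p) Nint.

Local Notation Mh := (upd Mopp p Mp).
Local Notation Mf := (upd Mopp p (Mp :|: Nint)).

Let covered_Mp : covered Mp \subset ~: V'.
Proof. by apply: covered_sub hMp => u v /and5P[-> ->]. Qed.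

Let covered_Nint : covered Nint \subset V'.
Proof. by apply: covered_sub hNint => u v /and5P[-> ->]. Qed.

Lemma disjoint_hidden_matchings : [disjoint covered Mp & covered Nint].
Proof. by rewrite disjoints_subset (subset_trans covered_Mp) // setCS. Qed.

Lemma matching_reveal : is_matching (intr owner adj setT p) (Mp :|: Nint).
Proof.
have to_setT R u v : intr owner adj R p u v -> intr owner adj setT p u v.
  by case/and5P=> _ _ *; apply/and5P; rewrite !inE.
apply: matching_setU disjoint_hidden_matchings.
  exact: matching_sub (to_setT _) hMp.
exact: matching_sub (to_setT _) hNint.
Qed.

Lemma valid_hidden : valid_profile owner adj (~: V') Mh.
Proof.
move=> q; have [->|qp] := eqVneq q p; first by rewrite upd_same.
have notV' w : owner w == q -> w \notin V'.
  by move=> /eqP wq; apply: contra qp => /V'_owner <-; rewrite wq.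
rewrite upd_other //; apply: matching_sub (hMopp qp) => u v /and5P[_ _ a uq vq].
by apply/and5P; rewrite !inE !notV'.
Qed.

Lemma valid_reveal : valid_profile owner adj setT Mf.
Proof.
move=> q; have [->|qp] := eqVneq q p; first by rewrite upd_same matching_reveal.
by rewrite upd_other // hMopp.
Qed.

Lemma all_covered_reveal v : v \in all_covered Mh -> v \in all_covered Mf.
Proof.
case/all_coveredP=> q; have [->|qp] := eqVneq q p.
  by rewrite upd_same => vMp; apply/all_coveredP; exists p; rewrite upd_same covered_setU vMp.
by rewrite upd_other // => vq; apply/all_coveredP; exists q; rewrite upd_other.
Qed.

Lemma all_covered_hide v : v \in all_covered Mf -> v \notin V' -> v \in all_covered Mh.
Proof.
case/all_coveredP=> q; have [->|qp] := eqVneq q p.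
  rewrite upd_same covered_setU => /orP[vMp | /(subsetP covered_Nint) ->] // _.
  by apply/all_coveredP; exists p; rewrite upd_same.
by rewrite upd_other // => vq _; apply/all_coveredP; exists q; rewrite upd_other.
Qed.

Local Notation g := (ext_rem owner adj (~: V') Mh).
Local Notation gp := (ext_rem owner adj setT Mf).

Lemma ext_hidden_sub : subrel g gp.
Proof.
move=> u v /and3P[/and4P[uV vV a o] uMh vMh]; rewrite /ext_rem /extr !inE a o /=.
have hide w : w \notin V' -> w \notin all_covered Mh -> w \notin all_covered Mf.
  by move=> wV; apply: contra => /all_covered_hide; apply.
by rewrite !inE in uV vV; rewrite !hide.
Qed.

Lemma ext_hidden_notin u v : g u v -> u \notin V'.
Proof. by case/and3P=> /and4P[]; rewrite inE. Qed.

Lemma ext_reveal_out u v : gp u v -> u \notin V' -> v \notin V' -> g u v.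
Proof.
move=> /and3P[/and4P[_ _ a o] uMf vMf] uV vV; rewrite /ext_rem /extr !inE uV vV a o /=.
by rewrite (contra (@all_covered_reveal u) uMf) (contra (@all_covered_reveal v) vMf).
Qed.

Lemma nrevealed_hidden_other q : q != p -> nrevealed owner (~: V') q = nrevealed owner setT q.
Proof.
move=> qp; apply: eq_card => v; rewrite !inE.
have [vq|] := eqVneq (owner v) q; rewrite ?andbF ?andbT //.
by apply: contraNN qp => /V'_owner <-; rewrite vq.
Qed.

Lemma nrevealed_hidden_lt : V' != set0 -> nrevealed owner (~: V') p < nrevealed owner setT p.
Proof.
case/set0Pn=> v vV'; apply: proper_card; apply/properP; split.
  by apply/subsetP=> u; rewrite !inE => /andP[_ ->].
by exists v; rewrite !inE ?vV' ?V'_owner ?eqxx.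
Qed.

Lemma priority_reveal (s sp : seq 'I_n) : V' != set0 ->
  sorted (fun q q' => nrevealed owner (~: V') q' <= nrevealed owner (~: V') q) s ->
  sorted (fun q q' => nrevealed owner setT q' <= nrevealed owner setT q) sp ->
  (forall q, q \in s) -> (forall q, q \in sp) ->
  forall a, a != p -> index p s < index a s -> index p sp < index a sp.
Proof.
move=> V'0 s_sorted sp_sorted s_all sp_all a ap lt; rewrite ltnNge; apply/negP=> le.
have := sorted_nonincr_index s_sorted (s_all p) (s_all a) (ltnW lt).
have := sorted_nonincr_index sp_sorted (sp_all a) (sp_all p) le.
rewrite (nrevealed_hidden_other ap) => le_f le_h.
by have := leq_trans le_f le_h; rewrite leqNgt nrevealed_hidden_lt.
Qed.

Lemma card_incident_reveal A : lex_IA owner adj A -> V' != set0 ->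
  #|incident owner (A (~: V') Mh) p| <= #|incident owner (A setT Mf) p|.
Proof.
move=> hA V'0.
have [s [s_perm s_sorted N_max N_lex]] := hA _ _ valid_hidden.
have [sp [sp_perm sp_sorted Np_max Np_lex]] := hA _ _ valid_reveal.
have s_all q : q \in s by rewrite (perm_mem s_perm) mem_enum.
have sp_all q : q \in sp by rewrite (perm_mem sp_perm) mem_enum.
rewrite (card_incident p N_max.1) (card_incident p Np_max.1).
apply: (nmatched_exchange (ext_rem_sym _ _) (ext_rem_irr _ _) (ext_rem_irr _ _)
  ext_hidden_sub ext_hidden_notin ext_reveal_out V'_owner s_all sp_all _ N_max N_lex Np_max Np_lex).
exact: priority_reveal.
Qed.

End Hiding.
End Game.

Lemma bigmax_matching_attained (V : finType) (r : rel V) (F : {set {set V}} -> nat) :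
  exists2 M, is_matching r M & \max_(N | is_matching r N) F N = F M.
Proof.
exists [arg max_(N > set0 | is_matching r N) F N]; last exact: bigmax_eq_arg (matching0 r).
by case: arg_maxnP => //; exact: matching0.
Qed.

Lemma nu_eq0 (V : finType) (r : rel V) : (forall u v, ~~ r u v) -> nu r = 0.
Proof.
move=> r0; apply/eqP; rewrite -leqn0; apply/bigmax_leqP=> N /andP[/forall_inP edges _].
rewrite leqn0 cards_eq0; apply/eqP/setP=> e; rewrite inE; apply/negP=> /edges.
by case/existsP=> u /existsP[v /andP[]]; rewrite (negbTE (r0 u v)).
Qed.

Theorem lemma1 (n : nat) (V : finType) (owner : V -> 'I_n) (adj : rel V)
    (adj_sym : symmetric adj) (adj_irr : irreflexive adj)
    (A : {set V} -> profile n V -> {set {set V}})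
    (hA : lex_IA owner adj A)
    (p : 'I_n) (Mopp : profile n V)
    (hMopp : forall q, q != p -> is_matching (intr owner adj setT q) (Mopp q))
    (V' : {set V}) (hV' : V' \subset [set v | owner v == p]) :
  best_utility owner adj A setT Mopp p >=
    2 * nu (intr owner adj V' p) + best_utility owner adj A (~: V') Mopp p.
Proof.
have [-> | V'0] := eqVneq V' set0.
  by rewrite setC0 nu_eq0 // => u v; rewrite /intr inE.
have V'_owner v : v \in V' -> owner v = p by move/(subsetP hV'); rewrite inE => /eqP.
rewrite /nu /best_utility.
have [Nint hNint ->] := bigmax_matching_attained (intr owner adj V' p) (fun N => #|N|).
have [Mp hMp ->] := bigmax_matching_attained (intr owner adj (~: V') p)
  (fun M => utility owner A (~: V') (upd Mopp p M) p).
apply: leq_trans _ (leq_bigmax_cond _ (matching_reveal hMp hNint)).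
have disj := disjoint_hidden_matchings hMp hNint.
rewrite /utility !upd_same (card_matching_setU (intr_irr owner adj_irr _ _) hMp disj).
rewrite mulnDr -addnA addnCA leq_add2l leq_add2l.
exact: (card_incident_reveal adj_sym adj_irr V'_owner hMopp hMp hNint hA V'0).
Qed.
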